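(* Let $(\mathsf K,\mathsf D)$ be a differential ring, $n\ge3$, $L=\sum_{k=0}^n\binom nk a_k\mathsf D^{n-k}$ ($a_0=1$), $u\in\mathsf K$, and let $L^{\star_u}:=(\mathsf D+a_1-u)^n+\sum_{m=2}^n\binom nm I_m(L)(\mathsf D+a_1-u)^{n-m}$ (rewritten in normal form $\sum_k\binom nk a_k^{\star_u}\mathsf D^{n-k}$, so that its first coefficient is $a_1-u$). Let $\delta=\Delta_{a_1}$. Then $W_2(L^{\star_u})=W_2(L)$, $$W_3(L^{\star_u})=W_3(L)+\tfrac32[u,W_2(L)],$$ and, if $n\ge4$, $$W_4(L^{\star_u})=W_4(L)+2[u,I_3(L)]+\tfrac65\Bigl([u,[u,W_2(L)]]-[\delta(u),W_2(L)]-2[u,\delta(W_2(L))]\Bigr).$$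
   Context: $\mathsf K$: unital associative (possibly noncommutative) ring with derivation $\mathsf D$; Ore algebra $\mathsf K\langle\mathsf D\rangle$ with $\mathsf D a=a\mathsf D+\mathsf D(a)$; $[x,y]=xy-yx$. For a monic operator $M=\sum_k\binom nk b_k\mathsf D^{n-k}$: $I_k(M)$ are the unique elements with $M=(\mathsf D+b_1)^n+\sum_{k\ge2}\binom nk I_k(M)(\mathsf D+b_1)^{n-k}$; $\Delta_{b_1}(x)=\mathsf D(x)+[b_1,x]$; $W_2(M)=I_2(M)$, $W_3(M)=I_3(M)-\frac32\Delta_{b_1}(I_2(M))$, $W_4(M)=I_4(M)-2\Delta_{b_1}(I_3(M))+\frac65\Delta_{b_1}^2(I_2(M))-\frac{3(5n+7)}{5(n+1)}I_2(M)^2$. *)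

(* Differential operators over a (noncommutative) Q-algebra K
   with a derivation D, represented in left normal form sum_i p_i D^i by their
   coefficient polynomial p : {poly K}.  The polynomial ring structure of
   {poly K} is used ONLY as a left K-module; the Ore product is [omul]. *)
From HB Require Import structures.
From mathcomp Require Import all_boot all_order all_algebra.
From Stdlib Require Import ClassicalEpsilon.
Set Implicit Arguments. Unset Strict Implicit. Unset Printing Implicit Defensive.
Import Order.TTheory GRing.Theory.
Local Open Scope ring_scope.

Section OreDefs.
Variables (K : algType rat) (D : K -> K).

Definition comm (x y : K) : K := x * y - y * x.

(* Ore product in K<D>:  (a D^i)(b D^j) = sum_k C(i,k) a D^k(b) D^(i-k+j) *)
Definition omul (p q : {poly K}) : {poly K} :=
  \sum_(i < size p) \sum_(j < size q) \sum_(k < i.+1)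
     ((p`_i * ('C(i, k)%:R * iter k D q`_j)) *: 'X^(i - k + j)).

Definition opow (p : {poly K}) (m : nat) : {poly K} := iter m (omul p) 1.

Definition Dplus (c : K) : {poly K} := 'X + c%:P.

(* for M = sum_k C(n,k) b_k D^(n-k), the coefficient b_1 = M_(n-1)/n *)
Definition b1 (n : nat) (M : {poly K}) : K := (n%:R^-1 : rat) *: M`_(n.-1).

Definition Iexpansion (n : nat) (M : {poly K}) (I : nat -> K) : Prop :=
  M = opow (Dplus (b1 n M)) n
      + \sum_(2 <= k < n.+1) (('C(n, k)%:R * I k) *: opow (Dplus (b1 n M)) (n - k)).

Definition Iinv (n : nat) (M : {poly K}) : nat -> K :=
  epsilon (inhabits (fun _ => 0)) (Iexpansion n M).

Definition Delta (b x : K) : K := D x + comm b x.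

Definition W2 (n : nat) (M : {poly K}) : K := Iinv n M 2.
Definition W3 (n : nat) (M : {poly K}) : K :=
  Iinv n M 3 - (3 / 2 : rat) *: Delta (b1 n M) (Iinv n M 2).
Definition W4 (n : nat) (M : {poly K}) : K :=
  Iinv n M 4 - (2 : rat) *: Delta (b1 n M) (Iinv n M 3)
  + (6 / 5 : rat) *: Delta (b1 n M) (Delta (b1 n M) (Iinv n M 2))
  - ((3 * (5 * n + 7))%:R / (5 * (n + 1))%:R : rat) *: (Iinv n M 2 * Iinv n M 2).

Definition opL (n : nat) (a : nat -> K) : {poly K} :=
  \sum_(k < n.+1) (('C(n, k)%:R * a k) *: 'X^(n - k)).

Definition Lstar (n : nat) (a : nat -> K) (u : K) : {poly K} :=
  opow (Dplus (a 1%N - u)) n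
  + \sum_(2 <= m < n.+1)
      (('C(n, m)%:R * Iinv n (opL n a) m) *: opow (Dplus (a 1%N - u)) (n - m)).

End OreDefs.

From HB Require Import structures.
From mathcomp Require Import all_boot all_order all_algebra ssrAC zify.
From Stdlib Require Import ClassicalEpsilon.
Import Order.TTheory GRing.Theory.
Local Open Scope ring_scope.
Set Implicit Arguments. Unset Strict Implicit. Unset Printing Implicit Defensive.

(* The operators (D + c)^m form a unitriangular family: (D + c)^m has degree
   m, leading coefficient 1 and subleading coefficient m c.  Hence the
   invariants I_k(M) are uniquely determined by their defining expansion, and
   L^{*u} is by construction such an expansion with b_1 = a_1 - u and the
   invariants of L: the gauge change keeps every I_k and shifts b_1 by -u.
   Since Delta_{b-u} = Delta_b - [u, .], and Delta_b is a derivation, the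
   formulas for W_3 and W_4 follow by expanding Delta_{b-u} and
   Delta_{b-u}^2. *)

Section Commutator.
Variable K : algType rat.

Lemma commDr (u x y : K) : comm u (x + y) = comm u x + comm u y.
Proof. by rewrite /comm mulrDl mulrDr opprD addrACA. Qed.

Lemma commBr (u x y : K) : comm u (x - y) = comm u x - comm u y.
Proof. by rewrite /comm mulrBl mulrBr !opprB !addrA [LHS](ACl (1*4*3*2)). Qed.

Lemma commBl (b u x : K) : comm (b - u) x = comm b x - comm u x.
Proof. by rewrite /comm mulrBl mulrBr !opprB !addrA [LHS](ACl (1*4*3*2)). Qed.

Lemma commMr (a y z : K) : comm a (y * z) = comm a y * z + y * comm a z.
Proof. by rewrite /comm mulrBl mulrBr !mulrA addrA subrK. Qed.

End Commutator.

Section Derivation.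
Variables (K : algType rat) (f : K -> K).
Hypothesis fD : forall x y : K, f (x + y) = f x + f y.
Hypothesis fM : forall x y : K, f (x * y) = f x * y + x * f y.

Lemma derf0 : f 0 = 0.
Proof. by apply: (addrI (f 0)); rewrite -fD !addr0. Qed.

Lemma derf1 : f 1 = 0.
Proof. by have := fM 1 1; rewrite !mulr1 mul1r => h; apply: (addrI (f 1)); rewrite -h addr0. Qed.

Lemma derfB (x y : K) : f (x - y) = f x - f y.
Proof.
have fN : f (- y) = - f y by apply: (addrI (f y)); rewrite -fD !subrr derf0.
by rewrite fD fN.
Qed.

Lemma derf_comm (u x : K) : f (comm u x) = comm (f u) x + comm u (f x).
Proof.
by rewrite /comm derfB !fM opprD !addrA [LHS](ACl (1*4*2*3)).
Qed.

End Derivation.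

Section Delta.
Variables (K : algType rat) (D : K -> K).
Hypothesis HDadd : forall x y : K, D (x + y) = D x + D y.
Hypothesis HDmul : forall x y : K, D (x * y) = D x * y + x * D y.

Lemma DeltaD b x y : Delta D b (x + y) = Delta D b x + Delta D b y.
Proof. by rewrite /Delta HDadd commDr addrACA. Qed.

Lemma DeltaM b x y : Delta D b (x * y) = Delta D b x * y + x * Delta D b y.
Proof. by rewrite /Delta HDmul commMr addrACA -mulrDl -mulrDr. Qed.

Lemma Delta_subl b u x : Delta D (b - u) x = Delta D b x - comm u x.
Proof. by rewrite /Delta commBl addrA. Qed.

Lemma Delta2_subl b u x :
  Delta D (b - u) (Delta D (b - u) x) = Delta D b (Delta D b x)
   + (comm u (comm u x) - comm (Delta D b u) x - (2 : rat) *: comm u (Delta D b x)).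
Proof.
rewrite !Delta_subl (derfB (DeltaD b)) commBr (derf_comm (DeltaD b) (DeltaM b)).
rewrite scaler_nat mulr2n !opprD !opprK !addrA.
by rewrite [LHS](ACl (1*8*9*2*3*4*5*6*7)).
Qed.

End Delta.

Section GaugeShift.
Variables (K : algType rat) (D : K -> K).
Hypothesis HDadd : forall x y : K, D (x + y) = D x + D y.
Hypothesis HDmul : forall x y : K, D (x * y) = D x * y + x * D y.
Variables (n : nat) (M M' : {poly K}) (u : K).
Hypothesis b1_shift : b1 n M' = b1 n M - u.
Hypothesis I2_eq : Iinv D n M' 2 = Iinv D n M 2.
Hypothesis I3_eq : Iinv D n M' 3 = Iinv D n M 3.

Lemma W3_shift : W3 D n M' = W3 D n M + (3 / 2 : rat) *: comm u (W2 D n M).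
Proof.
by rewrite /W3 /W2 b1_shift I2_eq I3_eq Delta_subl scalerBr opprB addrA [LHS]addrAC.
Qed.

Lemma W4_shift : Iinv D n M' 4 = Iinv D n M 4 ->
  W4 D n M' = W4 D n M + (2 : rat) *: comm u (Iinv D n M 3)
    + (6 / 5 : rat) *: (comm u (comm u (W2 D n M))
                        - comm (Delta D (b1 n M) u) (W2 D n M)
                        - (2 : rat) *: comm u (Delta D (b1 n M) (W2 D n M))).
Proof.
move=> I4_eq; rewrite /W4 /W2 b1_shift I2_eq I3_eq I4_eq.
rewrite Delta2_subl // Delta_subl.
set x := Delta D (b1 n M) (Iinv D n M 3); set y := comm u (Iinv D n M 3).
set z := Delta D (b1 n M) (Delta D (b1 n M) (Iinv D n M 2)).
set e := (_ - _ - _ : K); clearbody x y z e.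
by rewrite scalerBr scalerDr opprB !addrA [LHS](ACl (1*3*4*6*2*5)).
Qed.

End GaugeShift.

Section OreExpansion.
Variables (K : algType rat) (D : K -> K).
Hypothesis HDadd : forall x y : K, D (x + y) = D x + D y.
Hypothesis HDmul : forall x y : K, D (x * y) = D x * y + x * D y.

Lemma omul_Dplus c q : omul D (Dplus c) q = q * 'X + c *: q + map_poly D q.
Proof.
rewrite /omul /Dplus size_XaddC big_ord_recl big_ord_recl big_ord0 addr0.
rewrite !coefD !coefC !coefX /= add0r addr0.
under eq_bigr do rewrite big_ord_recl big_ord0 addr0 /= bin0 !mul1r subn0.
under [X in _ + X = _]eq_bigr do
  rewrite big_ord_recl big_ord_recl big_ord0 addr0 /= bin0 bin1 !mul1r subn0 subnn add0n add1n.
rewrite -big_split /=.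
have -> : q * 'X = \sum_(i < size q) q`_i *: 'X^(i.+1).
  rewrite -{1}[q]coefK poly_def mulr_suml; apply: eq_bigr => j _.
  by rewrite -scalerAl -exprSr.
have -> : c *: q = \sum_(i < size q) (c * q`_i) *: 'X^i.
  rewrite -{1}[q]coefK poly_def scaler_sumr; apply: eq_bigr => j _.
  by rewrite scalerA.
rewrite /map_poly poly_def -!big_split /=.
by apply: eq_bigr => j _; rewrite add0n addrCA addrA.
Qed.

Lemma coef_omul_Dplus c q i :
  (omul D (Dplus c) q)`_i = (if i is i'.+1 then q`_i' else 0) + c * q`_i + D q`_i.
Proof. by rewrite omul_Dplus !coefD coefMX coefZ coef_map_id0 ?(derf0 HDadd); case: i. Qed.

Lemma opow_Dplus_S c m : opow D (Dplus c) m.+1 = omul D (Dplus c) (opow D (Dplus c) m).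
Proof. by []. Qed.

Lemma coef_opow_Dplus_gt c m i : (m < i)%N -> (opow D (Dplus c) m)`_i = 0.
Proof.
elim: m i => [|m IH] [|i] //= hi; first by rewrite coefC.
by rewrite coef_omul_Dplus !IH ?(derf0 HDadd) ?mulr0 ?addr0 // ltnW.
Qed.

Lemma coef_opow_Dplus_lead c m : (opow D (Dplus c) m)`_m = 1.
Proof.
elim: m => [|m IH]; first by rewrite coefC.
by rewrite opow_Dplus_S coef_omul_Dplus IH coef_opow_Dplus_gt // (derf0 HDadd) mulr0 !addr0.
Qed.

Lemma coef_opow_Dplus_sublead c m : (opow D (Dplus c) m.+1)`_m = m.+1%:R * c.
Proof.
elim: m => [|m IH].
  by rewrite opow_Dplus_S coef_omul_Dplus coefC (derf1 HDmul) add0r addr0 mulr1 mul1r.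
rewrite opow_Dplus_S coef_omul_Dplus IH coef_opow_Dplus_lead (derf1 HDmul).
by rewrite addr0 mulr1 [in RHS]mulrSr mulrDl mul1r.
Qed.

End OreExpansion.

Lemma unitriangular_comb_eq0 (R : nzRingType) (P : nat -> {poly R}) (d : nat -> R)
    (l n : nat) :
  (forall m i, (m < i)%N -> (P m)`_i = 0) -> (forall m, (P m)`_m = 1) ->
  \sum_(l <= k < n.+1) d k *: P (n - k)%N = 0 ->
  forall k, (l <= k <= n)%N -> d k = 0.
Proof.
move=> P_gt P_lead comb0 k; elim/ltn_ind: k => k IH /andP[lk kn].
have := congr1 (fun p : {poly R} => p`_(n - k)%N) comb0.
rewrite /= coef0 coef_sum (bigD1_seq k) ?iota_uniq ?mem_index_iota ?lk //=.
rewrite coefZ P_lead mulr1 big1_seq ?addr0 // => j /andP[jk].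
rewrite mem_index_iota coefZ => /andP[lj jn].
case: (ltngtP j k) jk => // [jk | kj] _; first by rewrite IH ?mul0r // lj (leq_trans (ltnW jk)).
by rewrite P_gt ?mulr0 //; lia.
Qed.

Section Invariants.
Variables (K : algType rat) (D : K -> K).
Hypothesis HDadd : forall x y : K, D (x + y) = D x + D y.
Hypothesis HDmul : forall x y : K, D (x * y) = D x * y + x * D y.

Lemma Iexpansion_uniq n M I J : Iexpansion D n M I -> Iexpansion D n M J ->
  forall k, (2 <= k <= n)%N -> I k = J k.
Proof.
rewrite /Iexpansion; set P := opow D (Dplus (b1 n M)) => EI EJ k kn.
have comb0 : \sum_(2 <= j < n.+1) ('C(n, j)%:R * (I j - J j)) *: P (n - j)%N = 0.
  under eq_bigr do rewrite mulrBr scalerBl.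
  by rewrite sumrB; apply/eqP; rewrite subr_eq0 -(inj_eq (addrI (P n))) -EI -EJ.
have := unitriangular_comb_eq0 (coef_opow_Dplus_gt HDadd (b1 n M))
  (coef_opow_Dplus_lead HDadd (b1 n M)) comb0 kn.
move/eqP; rewrite mulr_natl -scaler_nat scaler_eq0 Num.Theory.pnatr_eq0 eqn0Ngt bin_gt0.
by case/andP: kn => _ -> /=; rewrite subr_eq0 => /eqP.
Qed.

Lemma Iinv_eq n M I : Iexpansion D n M I -> forall k, (2 <= k <= n)%N -> Iinv D n M k = I k.
Proof. by move=> EI; apply: (Iexpansion_uniq _ EI); apply: epsilon_spec; exists I. Qed.

Lemma b1_eq n (M : {poly K}) b : (0 < n)%N -> M`_n.-1 = n%:R * b -> b1 n M = b.
Proof.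
move=> n_gt0 sublead; rewrite /b1 sublead mulr_natl -scaler_nat scalerA mulVf ?scale1r //.
by rewrite Num.Theory.pnatr_eq0 -lt0n.
Qed.

Lemma coef_opL n (a : nat -> K) k : (k <= n)%N -> (opL n a)`_(n - k) = 'C(n, k)%:R * a k.
Proof.
move=> kn; rewrite /opL coef_sum (bigD1 (Ordinal (kn : k < n.+1)%N)) //=.
rewrite coefZ coefXn eqxx mulr1 big1 ?addr0 // => i /eqP ik.
rewrite coefZ coefXn; case: eqP => [eq_nk_ni | _]; last by rewrite mulr0.
by case: ik; apply: val_inj => /=; move: (ltn_ord i) eq_nk_ni; lia.
Qed.

Lemma b1_opL n (a : nat -> K) : (0 < n)%N -> b1 n (opL n a) = a 1%N.
Proof. by move=> n_gt0; apply: b1_eq; rewrite // -subn1 coef_opL // bin1. Qed.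

Lemma b1_Lstar n (a : nat -> K) u : (0 < n)%N -> b1 n (Lstar D n a u) = a 1%N - u.
Proof.
case: n => // n _; apply: b1_eq => //=.
rewrite /Lstar coefD coef_opow_Dplus_sublead // coef_sum big1_seq ?addr0 // => m.
rewrite mem_index_iota => /andP[_ /andP[m_gt1 m_le]].
by rewrite coefZ coef_opow_Dplus_gt ?mulr0 //; lia.
Qed.

Lemma Iinv_Lstar n (a : nat -> K) u k : (0 < n)%N -> (2 <= k <= n)%N ->
  Iinv D n (Lstar D n a u) k = Iinv D n (opL n a) k.
Proof. by move=> n_gt0; apply: Iinv_eq; rewrite /Iexpansion b1_Lstar. Qed.

End Invariants.

Theorem mainTheorem12 (K : algType rat) (D : K -> K)
  (HDadd : forall x y : K, D (x + y) = D x + D y)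
  (HDmul : forall x y : K, D (x * y) = D x * y + x * D y)
  (n : nat) (hn : (3 <= n)%N) (a : nat -> K) (ha0 : a 0%N = 1) (u : K) :
  let L := opL n a in
  let Ls := Lstar D n a u in
  let delta := Delta D (a 1%N) in
  W2 D n Ls = W2 D n L
  /\ W3 D n Ls = W3 D n L + (3 / 2 : rat) *: comm u (W2 D n L)
  /\ ((4 <= n)%N ->
      W4 D n Ls = W4 D n L + (2 : rat) *: comm u (Iinv D n L 3)
        + (6 / 5 : rat) *: (comm u (comm u (W2 D n L)) - comm (delta u) (W2 D n L)
                             - (2 : rat) *: comm u (delta (W2 D n L)))).
Proof.
move=> L Ls delta.
have n_gt0 : (0 < n)%N by apply: leq_trans hn.
have b1_shift : b1 n Ls = b1 n L - u by rewrite b1_Lstar ?b1_opL.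
have I_eq k : (2 <= k <= n)%N -> Iinv D n Ls k = Iinv D n L k.
  exact: Iinv_Lstar.
have I2_eq := I_eq 2%N (ltnW hn); have I3_eq := I_eq 3%N hn.
split; first by rewrite /W2 I2_eq.
split; first exact: W3_shift b1_shift I2_eq I3_eq.
move=> n_ge4; have I4_eq := I_eq 4%N n_ge4.
by rewrite (W4_shift HDadd HDmul b1_shift I2_eq I3_eq I4_eq) b1_opL.
Qed.
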